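(* Let $I=(a..c)$ be a conserved interval of $\mathcal{P}$ and let $F$ be a set of frontiers of $I$. Then, in each $P_k$, the elements of $F$ are either all positive or all negative.
   Context: Let $n\geq 2$ and let $\mathcal{P}=\{P_1,\ldots,P_K\}$ be signed permutations of $\{1,\ldots,n\}$: each $P_k$ is an ordering of $1,\ldots,n$ in which each element carries a sign $+$ (positive) or $-$ (negative). Assume $P_1=(+1,+2,\ldots,+n)$ and that every $P_k$ has first element $+1$ and last element $+n$. For integers $i\leq j$ write $(i..j)=\{i,\ldots,j\}$. A conserved interval of $\mathcal{P}$ is either a singleton, or a set $(a..c)$ with $a<c$ which (ignoring signs) occupies consecutive positions in every $P_k$ and which, in every $P_k$, has either $+a$ at its left end and $+c$ at its right end, or $-c$ at its left end and $-a$ at its right end. For a conserved interval $I=(a..c)$, a set $\{f_1,\ldots,f_k\}$ with $a=f_1<f_2<\cdots<f_k=c$ is a set of frontiers of $I$ if $(f_i..f_j)$ is a conserved interval for all $1\leq i<j\leq k$. *)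

From mathcomp Require Import all_boot.
Set Implicit Arguments. Unset Strict Implicit. Unset Printing Implicit Defensive.

(* A signed element is a pair (sign, value); sign = true means positive (+),
   sign = false means negative (-). A signed permutation is a sequence of
   signed elements. *)
Definition selt := (bool * nat)%type.
Definition sperm := seq selt.

Definition is_sperm (n : nat) (P : sperm) : Prop :=
  perm_eq (map snd P) (iota 1 n).

Definition sperm_id (n : nat) : sperm := [seq (true, i) | i <- iota 1 n].

Definition conserved_in (P : sperm) (a c : nat) : Prop :=
  exists s t u : sperm,
    P = s ++ t ++ u /\
    perm_eq (map snd t) (iota a (c - a).+1) /\
    ((head (true, 0) t == (true, a)) && (last (true, 0) t == (true, c))
     || (head (true, 0) t == (false, c)) && (last (true, 0) t == (false, a))).

Definition conserved (n : nat) (Ps : seq sperm) (a c : nat) : Prop :=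
  1 <= a /\ a <= c /\ c <= n /\
  (a = c \/ (a < c /\ forall P, P \in Ps -> conserved_in P a c)).

Definition frontiers (n : nat) (Ps : seq sperm) (a c : nat) (F : seq nat) : Prop :=
  sorted ltn F /\ F != [::] /\ head 0 F = a /\ last 0 F = c /\
  forall i j, i < j < size F -> conserved n Ps (nth 0 F i) (nth 0 F j).

From mathcomp Require Import all_boot zify.

Set Implicit Arguments.
Unset Strict Implicit.
Unset Printing Implicit Defensive.

(* Each value occurs exactly once in a signed permutation, so it has a well
   defined sign. A conserved block starts and ends with elements of the same
   sign, and every frontier f_j bounds the conserved interval (f_1..f_j) with
   f_1 = a, so all frontiers carry the sign of a. *)

Lemma uniq_map_inj_in (T1 T2 : eqType) (f : T1 -> T2) (s : seq T1) :
  uniq (map f s) -> {in s &, injective f}.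
Proof.
move=> Us x y xs ys fxy; rewrite -(nth_index x xs) -(nth_index x ys).
congr nth; apply: (uniqP (f x) Us); rewrite ?inE ?size_map ?index_mem //.
by rewrite !(nth_map x) ?index_mem // !nth_index.
Qed.

Lemma sperm_uniq n P : is_sperm n P -> uniq (map snd P).
Proof. by move=> HP; rewrite (perm_uniq HP) iota_uniq. Qed.

Lemma sperm_mem n P f : is_sperm n P -> 1 <= f <= n -> f \in map snd P.
Proof. by move=> HP Hf; rewrite (perm_mem HP) mem_iota; lia. Qed.

Lemma negative_not_positive (P : sperm) f :
  uniq (map snd P) -> (false, f) \in P -> (true, f) \notin P.
Proof. by move=> Us Hf; apply/negP => /(uniq_map_inj_in Us Hf)/(_ erefl). Qed.

Lemma sign_mem_map_snd (P : sperm) f :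
  f \in map snd P -> (true, f) \notin P -> (false, f) \in P.
Proof. by case/mapP => -[[] y] Hy /= ->; rewrite Hy. Qed.

Lemma conserved_in_sign (P : sperm) x y :
  uniq (map snd P) -> conserved_in P x y -> ((true, x) \in P) = ((true, y) \in P).
Proof.
move=> Us [s [t [u [EP [Ht Hends]]]]].
case: t EP Ht Hends => [|z t] EP Ht; first by have := perm_size Ht; rewrite size_iota.
have mem_z : z \in P by rewrite EP !mem_cat mem_head orbT.
have mem_l : last z t \in P by rewrite EP !mem_cat mem_last orbT.
case/orP=> /andP [/eqP /= Ez /eqP /= El]; move: mem_z mem_l; rewrite El Ez => mx my.
  by rewrite mx my.
by rewrite (negbTE (negative_not_positive Us mx)) (negbTE (negative_not_positive Us my)).
Qed.

Lemma conserved_sign n Ps P x y :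
  is_sperm n P -> P \in Ps -> conserved n Ps x y ->
  ((true, x) \in P) = ((true, y) \in P).
Proof.
move=> HP PPs [_ [_ [_ [-> | [_ Hin]]]]] //.
exact: conserved_in_sign (sperm_uniq HP) (Hin P PPs).
Qed.

Lemma frontiers_conserved_head n Ps a c F :
  conserved n Ps a c -> frontiers n Ps a c F -> {in F, forall f, conserved n Ps a f}.
Proof.
move=> [a1 [ac [cn _]]] [_ [_ [Fa [_ Hpairs]]]] f Hf.
have <- := nth_index 0 Hf; have Hi := index_mem f F; rewrite Hf in Hi.
have F0 : nth 0 F 0 = a by rewrite -Fa nth0.
case: (index f F) Hi => [|j] Hj.
  by rewrite F0; split; [|split; [|split; [lia | left]]].
by rewrite -F0; apply: Hpairs; rewrite Hj.
Qed.

Theorem lemma6 (n : nat) (P1 : sperm) (Ps' : seq sperm) (a c : nat) (F : seq nat) :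
  2 <= n ->
  P1 = sperm_id n ->
  (forall P, P \in P1 :: Ps' -> is_sperm n P) ->
  (forall P, P \in P1 :: Ps' -> head (false, 0) P = (true, 1) /\ last (false, 0) P = (true, n)) ->
  conserved n (P1 :: Ps') a c ->
  frontiers n (P1 :: Ps') a c F ->
  forall P, P \in P1 :: Ps' ->
    (forall f, f \in F -> (true, f) \in P) \/ (forall f, f \in F -> (false, f) \in P).
Proof.
move=> _ _ Hperm _ Hac HF P PPs.
have HP := Hperm P PPs.
have Ha_f := frontiers_conserved_head Hac HF.
have sign_f f : f \in F -> ((true, f) \in P) = ((true, a) \in P).
  by move=> Hf; rewrite (conserved_sign HP PPs (Ha_f f Hf)).
case Ha: ((true, a) \in P); [left | right] => f Hf; first by rewrite sign_f.
have [a1 [af [fn _]]] := Ha_f f Hf.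
apply: sign_mem_map_snd; first by apply: sperm_mem HP _; lia.
by rewrite sign_f // Ha.
Qed.
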